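(* Let $(T,\sigma)$ be a leaf-colored tree in which every inner vertex has exactly two children. Then for any three distinct colors $r,s,t$, no connected component of the subgraph of $G(T,\sigma)$ induced by the vertices of colors $r,s,t$ is of Type (C); that is, no such component contains an induced $6$-cycle in which any three consecutive vertices have pairwise distinct colors.
   Context: A planted phylogenetic tree $T$ is a rooted tree with distinguished root $0_T$ of degree $1$, all other non-leaf vertices of degree $\ge3$; $L(T)$ its leaves (excluding $0_T$), $|L(T)|\ge2$. $\preceq_T$ is the ancestor order towards $0_T$; $\mathrm{child}(v)$, $\mathrm{lca}_T$ as usual. $\sigma$ maps $L(T)$ to a set of colors. $y$ is a best match of $x$ if $\sigma(x)\ne\sigma(y)$ and $\mathrm{lca}_T(x,y)\preceq_T\mathrm{lca}_T(x,y')$ for all $y'$ with $\sigma(y')=\sigma(y)$. The RBMG $G(T,\sigma)$ is the vertex-colored undirected graph on $L(T)$ whose edges are the reciprocal best match pairs. A connected component of a 3-colored induced subgraph is of Type (C) if it contains an induced cycle on six vertices such that any three consecutive vertices of the cycle have pairwise distinct colors. *)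

From mathcomp Require Import all_boot.
Set Implicit Arguments. Unset Strict Implicit. Unset Printing Implicit Defensive.

(* A rooted tree on a finite vertex type V is given by a root [rt] and a
   parent map [par]; [par rt = rt] and every vertex reaches [rt] by
   iterating [par] (so there are no other cycles). *)
Section Tree.
Variables (V : finType) (rt : V) (par : V -> V).

(* anc u v  <->  u ⪯_T v, i.e. v lies on the path from u to the root
   (v is an ancestor of u, or v = u). *)
Definition anc (u v : V) : bool := [exists k : 'I_#|V|.+1, iter k par u == v].

Definition is_child (u v : V) : bool := (par u == v) && (u != rt).
Definition children (v : V) : {set V} := [set u | is_child u v].

Definition leaf (v : V) : bool := (v != rt) && (children v == set0).
Definition inner (v : V) : bool := (v != rt) && ~~ leaf v.

Definition planted_phylo_tree : Prop :=
  [/\ par rt = rt,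
      (forall v, anc v rt),
      #|children rt| = 1,
      (forall v, inner v -> 2 <= #|children v|)
    & 2 <= #|[set v | leaf v]| ].

Definition binary_tree : Prop := forall v, inner v -> #|children v| = 2.

Definition is_lca (x y w : V) : bool :=
  [&& anc x w, anc y w & [forall w', (anc x w' && anc y w') ==> anc w w']].
Definition lca (x y : V) : V := odflt rt [pick w | is_lca x y w].

Variables (C : eqType) (sigma : V -> C).

Definition best_match (x y : V) : bool :=
  [&& leaf x, leaf y, sigma x != sigma y &
      [forall y', (leaf y' && (sigma y' == sigma y)) ==> anc (lca x y) (lca x y')]].

Definition rbmg_edge (x y : V) : bool := best_match x y && best_match y x.

Definition in3 (r s t : C) (x : V) : bool :=
  leaf x && ((sigma x == r) || (sigma x == s) || (sigma x == t)).
Definition edge3 (r s t : C) : rel V :=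
  fun x y => [&& in3 r s t x, in3 r s t y & rbmg_edge x y].

Definition component3 (r s t : C) (x : V) : pred V :=
  fun y => in3 r s t x && connect (edge3 r s t) x y.

Definition succ6 (i : 'I_6) : 'I_6 := ordS i.
Definition hexagon3 (r s t : C) (c : 'I_6 -> V) : Prop :=
  [/\ injective c,
      (forall i, in3 r s t (c i)),
      (forall i j, edge3 r s t (c i) (c j) <-> (j = succ6 i \/ i = succ6 j))
    & (forall i, [/\ sigma (c i) != sigma (c (succ6 i)),
                     sigma (c (succ6 i)) != sigma (c (succ6 (succ6 i)))
                   & sigma (c i) != sigma (c (succ6 (succ6 i)))]) ].

Definition typeC (r s t : C) (K : pred V) : Prop :=
  exists c : 'I_6 -> V, hexagon3 r s t c /\ (forall i, K (c i)).

End Tree.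

From Pilot Require Import Defs.
From mathcomp Require Import all_boot.
Set Implicit Arguments. Unset Strict Implicit. Unset Printing Implicit Defensive.

(* Let c_0, ..., c_5 be a Type (C) hexagon and let w be the
   lowest common ancestor of its six leaves.  Since the leaves are distinct,
   w is none of them; since the root has a single child, w is not the root;
   hence w is inner and (the tree being binary) has exactly two children a, b.
   Every c_i lies below exactly one of them, and not all below the same one,
   so some consecutive pair has c_i below a and c_{i+1} below b.  Then
   lca(c_i, c_{i+1}) = w, and the reciprocal best match c_i -- c_{i+1} says
   exactly that no leaf of colour sigma(c_{i+1}) lies below a and no leaf of
   colour sigma(c_i) lies below b.  Three colours with any three consecutive
   distinct force sigma(c_{i+3}) = sigma(c_i), so c_{i+3} lies below a, and
   the same criterion makes c_{i+3} -- c_{i+1} an edge: a chord of the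
   induced hexagon, a contradiction. *)

Lemma succ6_neq (i : 'I_6) : succ6 i != i.
Proof. by case: i => [[|[|[|[|[|[|?]]]]]] ?]. Qed.

Lemma succ6_opposite_nonadj (i : 'I_6) :
  ~ (succ6 i = succ6 (succ6 (succ6 (succ6 i))) \/
     succ6 (succ6 (succ6 i)) = succ6 (succ6 i)).
Proof. by case: i => [[|[|[|[|[|[|?]]]]]] ?] //= [] /(congr1 val). Qed.

Lemma succ6_invariant_const (f : 'I_6 -> bool) :
  (forall i, f i = f (succ6 i)) -> forall i, f i = f ord0.
Proof.
move=> f_inv [k lt_k6].
elim: k lt_k6 => [|k IHk] lt_k6; first by congr f; apply: val_inj.
rewrite -(IHk (ltnW lt_k6)) [RHS]f_inv; congr f; apply: val_inj => /=.
by rewrite modn_small.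
Qed.

Lemma three_colours_period (C : eqType) (r s t p q u v : C) :
  r != s -> s != t -> r != t ->
  (p == r) || (p == s) || (p == t) -> (q == r) || (q == s) || (q == t) ->
  (u == r) || (u == s) || (u == t) -> (v == r) || (v == s) || (v == t) ->
  p != q -> q != u -> p != u -> u != v -> q != v -> v = p.
Proof.
move=> rs st rt.
by do 4!move=> /orP[/orP[]|] /eqP->;
  rewrite ?eqxx //= ?(eq_sym s r) ?(eq_sym t s) ?(eq_sym t r) ?rs ?st ?rt.
Qed.

Section Ancestors.
Variables (V : finType) (rt : V) (par : V -> V).
Hypothesis par_rt : par rt = rt.
Hypothesis reach_rt : forall v, anc par v rt.

Local Notation anc := (anc par).
Local Notation is_child := (is_child rt par).
Local Notation lca := (lca rt par).

Lemma ancE u v : anc u v = fconnect par u v.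
Proof.
apply/existsP/idP => [[k /eqP <-]|conn_uv]; first exact: fconnect_iter.
have lt_idx : findex par u v < #|V|.+1.
  exact: leq_trans (findex_max conn_uv) (leq_trans (max_card _) (leqnSn _)).
by exists (Ordinal lt_idx); apply/eqP; apply: iter_findex.
Qed.

Lemma anc_iter k u : anc u (iter k par u).
Proof. by rewrite ancE; apply: fconnect_iter. Qed.

Lemma ancP u v : reflect (exists k, iter k par u = v) (anc u v).
Proof.
apply: (iffP idP) => [|[k <-]]; last exact: anc_iter.
by rewrite ancE => conn_uv; exists (findex par u v); apply: iter_findex.
Qed.

Lemma anc_trans u v w : anc u v -> anc v w -> anc u w.
Proof. rewrite !ancE; exact: connect_trans. Qed.

Lemma iter_par_rt k : iter k par rt = rt.
Proof. by elim: k => //= k ->. Qed.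

Lemma par_fixed_rt v : par v = v -> v = rt.
Proof.
by move=> fix_v; case/ancP: (reach_rt v) => k <-; elim: k => //= k <-.
Qed.

(* Since everything reaches the root, par has no cycles besides rt. *)
Lemma anc_antisym u v : anc u v -> anc v u -> u = v.
Proof.
case/ancP=> [[|k] uv]; case/ancP=> m vu //.
have period n : iter (n * (k.+1 + m)) par u = u.
  by elim: n => // n IHn; rewrite mulSn iterD IHn (addnC k.+1 m) iterD uv vu.
case/ancP: (reach_rt u) => j uj.
have le_j : j <= j.+1 * (k.+1 + m).
  by rewrite mulSn (leq_trans _ (leq_addl _ _)) // leq_pmulr.
have u_rt : u = rt by rewrite -(period j.+1) -(subnK le_j) iterD uj iter_par_rt.
by rewrite -uv u_rt iter_par_rt.
Qed.

Lemma anc_total x u v : anc x u -> anc x v -> anc u v || anc v u.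
Proof.
case/ancP=> k <-; case/ancP=> m <-.
case: (leqP k m) => [le_km|/ltnW le_mk].
  by rewrite -(subnK le_km) iterD anc_iter.
by rewrite -(subnK le_mk) iterD anc_iter orbT.
Qed.

Lemma anc_par_step u v : anc u v -> v != u -> anc (par u) v.
Proof.
by case/ancP=> [[|k] <-]; rewrite ?eqxx // iterSr => _; apply: anc_iter.
Qed.

Lemma anc_findex x u v : anc x u -> anc x v ->
  findex par x u <= findex par x v -> anc u v.
Proof.
rewrite !ancE => xu xv le_uv.
rewrite -(iter_findex xu) -(iter_findex xv) -(subnK le_uv) iterD -ancE.
exact: anc_iter.
Qed.

Lemma child_anc a w : is_child a w -> anc a w.
Proof. by case/andP=> /eqP <- _; apply: (anc_iter 1). Qed.

Lemma child_neq a w : is_child a w -> a != w.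
Proof.
case/andP=> /eqP par_a a_rt; apply: contraNneq a_rt => a_w.
by rewrite a_w in par_a *; rewrite (par_fixed_rt par_a).
Qed.

Lemma anc_child x w : anc x w -> x != w -> exists2 a, is_child a w & anc x a.
Proof.
rewrite ancE => xw x_w.
set n := findex par x w.
have n_gt0 : 0 < n by rewrite lt0n findex_eq0.
have par_a : par (iter n.-1 par x) = w by rewrite -iterS prednK // iter_findex.
exists (iter n.-1 par x); last exact: anc_iter.
rewrite /is_child par_a eqxx /=; apply/eqP => a_rt.
have w_rt : w = rt by rewrite -par_a a_rt par_rt.
have := findex_iter (leq_ltn_trans (leq_pred n) (findex_max xw)).
rewrite a_rt -w_rt -/n => n_pred.
by have := ltn_predL n; rewrite n_gt0 -n_pred ltnn.
Qed.

Lemma child_uniq a b w x : is_child a w -> is_child b w -> anc x a -> anc x b ->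
  a = b.
Proof.
move=> aw bw xa xb.
wlog ab : a b aw bw xa xb / anc a b.
  by move=> W; case/orP: (anc_total xa xb) => ?; [|apply/esym]; apply: W.
case: (eqVneq b a) => // b_a.
have wb : anc w b by case/andP: aw => /eqP <- _; apply: anc_par_step.
by have := child_neq bw; rewrite (anc_antisym wb (child_anc bw)) eqxx.
Qed.

Lemma lowest_in_chain x (P : pred V) : P rt -> (forall w, P w -> anc x w) ->
  exists2 w, P w & forall w', P w' -> anc w w'.
Proof.
move=> P_rt P_anc.
case: (arg_minnP (fun w => findex par x w) P_rt) => w Pw w_min.
exists w => // w' Pw'.
exact: anc_findex (P_anc _ Pw) (P_anc _ Pw') (w_min _ Pw').
Qed.

(* The lca of Defs is indeed a lowest common ancestor (the pick succeeds). *)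
Lemma lca_spec x y : is_lca par x y (lca x y).
Proof.
rewrite /lca; case: pickP => [w //|no_lca].
have rt_common : anc x rt && anc y rt by rewrite !reach_rt.
have [w /andP[xw yw] w_min] := @lowest_in_chain x
  (fun w => anc x w && anc y w) rt_common (fun w xyw => proj1 (andP xyw)).
have := no_lca w; rewrite /is_lca xw yw /=; move/negbT/negP; case.
by apply/forallP => w'; apply/implyP => xyw'; apply: w_min.
Qed.

Lemma lca_l x y : anc x (lca x y).
Proof. by case/and3P: (lca_spec x y). Qed.

Lemma lca_r x y : anc y (lca x y).
Proof. by case/and3P: (lca_spec x y). Qed.

Lemma lca_min x y w : anc x w -> anc y w -> anc (lca x y) w.
Proof.
case/and3P: (lca_spec x y) => _ _ /forallP lca_low xw yw.
by apply: (implyP (lca_low w)); rewrite xw.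
Qed.

Lemma lca_above_parent x y a w : is_child a w -> anc x a ->
  anc w (lca x y) = ~~ anc y a.
Proof.
move=> aw xa; case ya: (anc y a).
  apply/negbTE/negP => w_lca.
  have := child_neq aw.
  have wa := anc_trans w_lca (lca_min xa ya).
  by rewrite (anc_antisym wa (child_anc aw)) eqxx.
change (anc w (lca x y)).
case/orP: (anc_total xa (lca_l x y)) => [a_lca|lca_a].
  case: (eqVneq (lca x y) a) => [lca_eq|lca_neq].
    by move: (lca_r x y); rewrite lca_eq ya.
  by have := anc_par_step a_lca lca_neq; case/andP: aw => /eqP ->.
by move: (anc_trans (lca_r x y) lca_a); rewrite ya.
Qed.

Lemma lca_siblings x y a b w : is_child a w -> is_child b w -> a != b ->
  anc x a -> anc y b -> lca x y = w.
Proof.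
move=> aw bw a_b xa yb; apply: anc_antisym.
  exact: lca_min (anc_trans xa (child_anc aw)) (anc_trans yb (child_anc bw)).
rewrite (lca_above_parent y aw xa); apply: contra a_b => ya.
by rewrite (child_uniq aw bw ya yb).
Qed.

Lemma anc_leaf u v : leaf rt par v -> anc u v -> u = v.
Proof.
case/andP=> _ /eqP no_child uv; apply/eqP/negPn/negP => u_v.
have [a av _] := anc_child uv u_v.
have : a \in children rt par v by rewrite inE.
by rewrite no_child inE.
Qed.

Lemma lowest_common_anc (I : finType) (f : I -> V) (i0 : I) :
  exists2 w, (forall i, anc (f i) w) &
             (forall w', (forall i, anc (f i) w') -> anc w w').
Proof.
have rt_common : [forall i, anc (f i) rt].
  by apply/forallP => i; apply: reach_rt.
have [w /forallP fw w_min] := @lowest_in_chain (f i0)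
  [pred w | [forall i, anc (f i) w]] rt_common (fun w fw => forallP fw i0).
by exists w => // w' fw'; apply: w_min; apply/forallP.
Qed.

Lemma lowest_common_anc_split (I : finType) (f : I -> V) w a :
  (forall w', (forall i, anc (f i) w') -> anc w w') ->
  is_child a w -> ~ (forall i, anc (f i) a).
Proof.
move=> w_min aw fa; have := child_neq aw.
by rewrite (anc_antisym (w_min a fa) (child_anc aw)) eqxx.
Qed.

(* Under a root with a single child, the lowest common ancestor w of a
   family avoiding w is an inner vertex: it is not the root (the root's
   child is a lower common ancestor) and it has a child. *)
Lemma lowest_common_anc_inner (I : finType) (f : I -> V) (i0 : I) w :
  #|children rt par rt| = 1 -> (forall i, anc (f i) w) ->
  (forall w', (forall i, anc (f i) w') -> anc w w') ->
  (forall i, f i != w) -> inner rt par w.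
Proof.
move=> rt_one_child fw w_min f_neq.
have children_w d : (d \in children rt par w) = is_child d w by rewrite inE.
have [d0 d0w _] := anc_child (fw i0) (f_neq i0).
have w_rt : w != rt.
  apply/eqP => w_rt; rewrite {}w_rt in fw w_min f_neq children_w d0w.
  case/cards1P: (introT eqP rt_one_child) => ch children_rt.
  have only_ch d : is_child d rt -> d = ch.
    by rewrite -children_w children_rt inE => /eqP.
  apply: (lowest_common_anc_split w_min d0w) => i.
  have [d dw fd] := anc_child (fw i) (f_neq i).
  by rewrite (only_ch _ d0w) -(only_ch _ dw).
rewrite /inner /Defs.leaf w_rt /=; apply/set0Pn.
by exists d0; rewrite children_w.
Qed.

Section BestMatch.
Variables (C : eqType) (sigma : V -> C).

Local Notation leaf := (leaf rt par).
Local Notation best_match := (best_match rt par sigma).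
Local Notation rbmg_edge := (rbmg_edge rt par sigma).

Lemma best_match_siblings x y a b w :
  is_child a w -> is_child b w -> a != b -> anc x a -> anc y b ->
  best_match x y =
  [&& leaf x, leaf y, sigma x != sigma y &
      [forall y', (leaf y' && (sigma y' == sigma y)) ==> ~~ anc y' a]].
Proof.
move=> aw bw a_b xa yb.
rewrite /Defs.best_match (lca_siblings aw bw a_b xa yb).
do 3!congr (_ && _); apply: eq_forallb => y'.
by rewrite (lca_above_parent y' aw xa).
Qed.

Lemma best_match_siblings_excl x y y' a b w :
  is_child a w -> is_child b w -> a != b -> anc x a -> anc y b ->
  best_match y x -> leaf y' -> sigma y' = sigma x -> ~~ anc y' b.
Proof.
move=> aw bw a_b xa yb.
have b_a : b != a by rewrite eq_sym.
rewrite (best_match_siblings bw aw b_a yb xa).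
case/and4P=> _ _ _ /forallP no_col leaf_y' col_y'.
by apply: (implyP (no_col y')); rewrite leaf_y' col_y' eqxx.
Qed.

Lemma rbmg_edge_siblings_transfer x x' y a b w :
  is_child a w -> is_child b w -> a != b -> anc x a -> anc x' a -> anc y b ->
  leaf x' -> sigma x' = sigma x -> rbmg_edge x y -> rbmg_edge x' y.
Proof.
move=> aw bw a_b xa x'a yb leaf_x' col_x'.
have b_a : b != a by rewrite eq_sym.
rewrite /Defs.rbmg_edge.
rewrite !(best_match_siblings aw bw a_b _ yb) //.
rewrite !(best_match_siblings bw aw b_a yb) //.
case/andP=> /and4P[_ leaf_y col_xy no_y_col] /and4P[_ _ col_yx no_x_col].
by rewrite leaf_x' leaf_y col_x' col_xy col_yx no_y_col no_x_col.
Qed.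

Section Hexagon.
Variables (c : 'I_6 -> V) (r s t : C).
Hypotheses (r_s : r != s) (s_t : s != t) (r_t : r != t).
Hypothesis hex : hexagon3 rt par sigma r s t c.

Local Notation succ3 i := (succ6 (succ6 (succ6 i))).

Lemma hexagon_leaf i : leaf (c i).
Proof. by case: hex => _ in3c _ _; case/andP: (in3c i). Qed.

Lemma hexagon_edge i j :
  edge3 rt par sigma r s t (c i) (c j) <-> (j = succ6 i \/ i = succ6 j).
Proof. by case: hex. Qed.

Lemma hexagon_colour_period i : sigma (c (succ3 i)) = sigma (c i).
Proof.
case: hex => _ in3c _ col; have palette j := proj2 (andP (in3c j)).
case: (col i) => ne01 ne12 ne02; case: (col (succ6 i)) => _ ne23 ne13.
exact: three_colours_period r_s s_t r_t (palette _) (palette _) (palette _)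
  (palette _) ne01 ne12 ne02 ne23 ne13.
Qed.

(* If all hexagon vertices lie below the two sibling children a and b, then
   no edge of the hexagon runs from the subtree of a to that of b: otherwise
   the opposite vertex of the hexagon would yield a chord. *)
Lemma hexagon_no_crossing a b w i :
  is_child a w -> is_child b w -> a != b ->
  (forall j, anc (c j) a || anc (c j) b) ->
  anc (c i) a -> ~ anc (c (succ6 i)) b.
Proof.
move=> aw bw a_b below_ab ia i1b.
have /and3P[_ _ edge_i] := proj2 (hexagon_edge i (succ6 i)) (or_introl erefl).
have i3a : anc (c (succ3 i)) a.
  case/orP: (below_ab (succ3 i)) => // i3b.
  have := best_match_siblings_excl aw bw a_b ia i1b (proj2 (andP edge_i))
    (hexagon_leaf _) (hexagon_colour_period i).
  by rewrite i3b.
have chord : edge3 rt par sigma r s t (c (succ3 i)) (c (succ6 i)).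
  case: hex => _ in3c _ _; rewrite /edge3 !in3c /=.
  exact: rbmg_edge_siblings_transfer aw bw a_b ia i3a i1b
    (hexagon_leaf _) (hexagon_colour_period i) edge_i.
exact: succ6_opposite_nonadj (proj1 (hexagon_edge _ _) chord).
Qed.

(* The lowest common ancestor of the hexagon splits it into the subtrees of
   its two children, and an edge of the hexagon would have to cross. *)
Lemma hexagon_impossible :
  #|children rt par rt| = 1 -> binary_tree rt par -> False.
Proof.
move=> rt_one_child binary.
have [w cw w_min] := lowest_common_anc c ord0.
have c_neq_w i : c i != w.
  apply/eqP => ci_w; have i1_i : anc (c (succ6 i)) (c i) by rewrite ci_w.
  have := succ6_neq i; case: hex => inj _ _ _.
  by rewrite (inj _ _ (anc_leaf (hexagon_leaf i) i1_i)) eqxx.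
have w_inner := lowest_common_anc_inner ord0 rt_one_child cw w_min c_neq_w.
case/cards2P: (introT eqP (binary _ w_inner)) => a [b [a_b children_w]].
have child_w d : is_child d w = (d == a) || (d == b).
  by rewrite -!in_set1 -in_setU -children_w inE.
have [aw bw] : is_child a w /\ is_child b w by rewrite !child_w !eqxx orbT.
have below_ab j : anc (c j) a || anc (c j) b.
  have [d] := anc_child (cw j) (c_neq_w j).
  by rewrite child_w => /orP[] /eqP-> ->; rewrite ?orbT.
have below_ba j : anc (c j) b || anc (c j) a by rewrite orbC.
have in_b j : ~~ anc (c j) a -> anc (c j) b by move: (below_ab j); case: (anc (c j) a).
have b_a : b != a by rewrite eq_sym.
have side_invariant i : anc (c i) a = anc (c (succ6 i)) a.
  case ia: (anc (c i) a); case i1a: (anc (c (succ6 i)) a) => //.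
    by case: (hexagon_no_crossing aw bw a_b below_ab ia (in_b _ (negbT i1a))).
  by case: (hexagon_no_crossing bw aw b_a below_ba (in_b _ (negbT ia)) i1a).
have side := succ6_invariant_const side_invariant.
case c0a: (anc (c ord0) a).
  by apply: (lowest_common_anc_split w_min aw) => j; rewrite side.
apply: (lowest_common_anc_split w_min bw) => j.
by apply: in_b; rewrite side c0a.
Qed.

End Hexagon.
End BestMatch.
End Ancestors.

Theorem mainTheorem19 (V : finType) (rt : V) (par : V -> V)
  (C : eqType) (sigma : V -> C) :
  planted_phylo_tree rt par -> binary_tree rt par ->
  forall r s t : C, r != s -> s != t -> r != t ->
  forall x : V, in3 rt par sigma r s t x ->
  ~ typeC rt par sigma r s t (component3 rt par sigma r s t x).
Proof.
case=> par_rt reach_rt rt_one_child _ _ binary r s t r_s s_t r_t x _.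
case=> c [hex _].
exact: (hexagon_impossible par_rt reach_rt r_s s_t r_t hex rt_one_child binary).
Qed.
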